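(* Consider problem (VP) under the standing assumptions at $\bar x\in Q_0$. Let $\bar x$ be a local weak efficient solution of (VP) (in particular, a local efficient solution), let $u\in\mathcal{C}(\bar x)$, and suppose $L^2(Q;\bar x,u)\subset T^2(Q_0;\bar x,u)$. Then there is no $v\in X$ such that $f_i^{\circ}(\bar x,v)+f_i^{\circ\circ}(\bar x,u)<0$ for all $i\in I(\bar x;u)$ and $g_j^{\circ}(\bar x,v)+g_j^{\circ\circ}(\bar x,u)\leqq0$ for all $j\in J(\bar x;u)$.
   Context: Standing setting: $X$ is a Banach space; $I=\{1,\dots,p\}$, $J=\{1,\dots,m\}$; $f_i,g_j\colon X\to\mathbb{R}$; (VP) minimizes $f=(f_1,\dots,f_p)$ over $Q_0:=\{x\in X: g_j(x)\leqq 0,\ j\in J\}$. $J(\bar x):=\{j\in J: g_j(\bar x)=0\}$. Standing assumptions: $f_i$ ($i\in I$), $g_j$ ($j\in J(\bar x)$) locally Lipschitz at $\bar x$; $g_j$ ($j\notin J(\bar x)$) continuous at $\bar x$. $F^{\circ}(\bar x,u):=\limsup_{x\to\bar x,\,t\downarrow0}\frac{F(x+tu)-F(x)}{t}$; $F^{\circ\circ}(\bar x,u):=\limsup_{t\downarrow0}\frac{F(\bar x+tu)-F(\bar x)-tF^{\circ}(\bar x,u)}{\frac12t^2}$. $I(\bar x;u):=\{i\in I: f_i^{\circ}(\bar x,u)=0\}$, $J(\bar x;u):=\{j\in J(\bar x): g_j^{\circ}(\bar x,u)=0\}$. Lexicographic order on $\mathbb{R}^2$: $a\leqq_{\rm lex}b$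 iff $a_1<b_1$ or ($a_1=b_1$, $a_2\leqq b_2$). $F_i^2(\bar x;u,v):=(f_i^{\circ}(\bar x,u),\, f_i^{\circ}(\bar x,v)+f_i^{\circ\circ}(\bar x,u))$, $G_j^2(\bar x;u,v):=(g_j^{\circ}(\bar x,u),\, g_j^{\circ}(\bar x,v)+g_j^{\circ\circ}(\bar x,u))$. $Q:=Q_0\cap\{x: f_i(x)\leqq f_i(\bar x),\ i\in I\}$; $L^2(Q;\bar x,u):=\{v: F_i^2(\bar x;u,v)\leqq_{\rm lex}(0,0)\ \forall i\in I,\ G_j^2(\bar x;u,v)\leqq_{\rm lex}(0,0)\ \forall j\in J(\bar x)\}$. $T^2(\Omega;\bar x,u):=\{v: \exists t_k\downarrow0,\ \exists v^k\to v,\ \bar x+t_ku+\frac12t_k^2v^k\in\Omega\ \forall k\}$. Critical direction: $u$ with $f_i^{\circ}(\bar x,u)\leqq0$ for all $i$, $=0$ for some $i$, and $g_j^{\circ}(\bar x,u)\leqq0$ for all $j\in J(\bar x)$; $\mathcal{C}(\bar x)$ is the set of these. Local weak efficient solution: a neighborhood $U$ of $\bar x$ exists such that no $x\in U\cap Q_0$ has $f_i(x)<f_i(\bar x)$ for all $i\in I$. *)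

From Stdlib Require Import Reals Lra Classical ClassicalEpsilon.
Open Scope R_scope.

Record BanachSpace := {
  carrier :> Type;
  vzero : carrier;
  vadd : carrier -> carrier -> carrier;
  vopp : carrier -> carrier;
  vscal : R -> carrier -> carrier;
  vnorm : carrier -> R;
  vadd_comm : forall x y, vadd x y = vadd y x;
  vadd_assoc : forall x y z, vadd x (vadd y z) = vadd (vadd x y) z;
  vadd_zero : forall x, vadd x vzero = x;
  vadd_opp : forall x, vadd x (vopp x) = vzero;
  vscal_one : forall x, vscal 1 x = x;
  vscal_assoc : forall a b x, vscal a (vscal b x) = vscal (a * b) x;
  vscal_distr_r : forall a x y, vscal a (vadd x y) = vadd (vscal a x) (vscal a y);
  vscal_distr_l : forall a b x, vscal (a + b) x = vadd (vscal a x) (vscal b x);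
  vnorm_nonneg : forall x, 0 <= vnorm x;
  vnorm_eq0 : forall x, vnorm x = 0 -> x = vzero;
  vnorm_scal : forall a x, vnorm (vscal a x) = Rabs a * vnorm x;
  vnorm_triangle : forall x y, vnorm (vadd x y) <= vnorm x + vnorm y;
  vcomplete : forall s : nat -> carrier,
      (forall eps, eps > 0 -> exists N, forall n k, (n >= N)%nat -> (k >= N)%nat ->
          vnorm (vadd (s n) (vopp (s k))) < eps) ->
      exists l, forall eps, eps > 0 -> exists N, forall n, (n >= N)%nat ->
          vnorm (vadd (s n) (vopp l)) < eps
}.

Arguments vzero {_}. Arguments vadd {_}. Arguments vopp {_}.
Arguments vscal {_}. Arguments vnorm {_}.

Definition vdist {X : BanachSpace} (x y : X) : R := vnorm (vadd x (vopp y)).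

Inductive Rbar := Fin (r : R) | PInf | MInf.

Definition Rbar_lt (a b : Rbar) : Prop :=
  match a, b with
  | Fin x, Fin y => x < y
  | MInf, Fin _ | MInf, PInf | Fin _, PInf => True
  | _, _ => False
  end.
Definition Rbar_le (a b : Rbar) : Prop := Rbar_lt a b \/ a = b.

(* convention PInf + MInf = PInf (never used under the standing assumptions) *)
Definition Rbar_plus (a b : Rbar) : Rbar :=
  match a, b with
  | Fin x, Fin y => Fin (x + y)
  | PInf, _ | _, PInf => PInf
  | _, _ => MInf
  end.
Definition Rbar_opp (a : Rbar) : Rbar :=
  match a with Fin x => Fin (- x) | PInf => MInf | MInf => PInf end.
(* real part; only applied to quantities that are finite under the standing
   assumptions *)
Definition Rbar_real (a : Rbar) : R := match a with Fin x => x | _ => 0 end.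

Definition sup_R (S : R -> Prop) : Rbar :=
  match excluded_middle_informative (exists x, S x) with
  | right _ => MInf
  | left Hne =>
      match excluded_middle_informative (bound S) with
      | right _ => PInf
      | left Hb => Fin (proj1_sig (completeness S Hb Hne))
      end
  end.
Definition Rbar_sup (P : Rbar -> Prop) : Rbar :=
  match excluded_middle_informative (P PInf) with
  | left _ => PInf
  | right _ => sup_R (fun r => P (Fin r))
  end.
Definition Rbar_inf (P : Rbar -> Prop) : Rbar :=
  Rbar_opp (Rbar_sup (fun y => P (Rbar_opp y))).

(* F°(xb,u) = limsup_{x -> xb, t ↓ 0} (F(x+tu)-F(x))/t
            = inf_{d>0} sup { (F(x+tu)-F(x))/t : ||x-xb|| < d, 0 < t < d } *)
Definition clarke {X : BanachSpace} (F : X -> R) (xb u : X) : Rbar :=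
  Rbar_inf (fun y => exists d, d > 0 /\
    y = sup_R (fun q => exists x t, vdist x xb < d /\ 0 < t < d /\
                  q = (F (vadd x (vscal t u)) - F x) / t)).

(* F°°(xb,u) = limsup_{t ↓ 0} (F(xb+tu)-F(xb)-t F°(xb,u)) / (t^2/2) *)
Definition clarke2 {X : BanachSpace} (F : X -> R) (xb u : X) : Rbar :=
  Rbar_inf (fun y => exists d, d > 0 /\
    y = sup_R (fun q => exists t, 0 < t < d /\
          q = (F (vadd xb (vscal t u)) - F xb - t * Rbar_real (clarke F xb u))
              / (t ^ 2 / 2))).

Definition loc_lipschitz_at {X : BanachSpace} (F : X -> R) (xb : X) : Prop :=
  exists K d, d > 0 /\ forall x y, vdist x xb < d -> vdist y xb < d ->
    Rabs (F x - F y) <= K * vdist x y.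
Definition continuous_at {X : BanachSpace} (F : X -> R) (xb : X) : Prop :=
  forall eps, eps > 0 -> exists d, d > 0 /\
    forall x, vdist x xb < d -> Rabs (F x - F xb) < eps.

Definition inI (p i : nat) : Prop := (1 <= i <= p)%nat.
Definition inJ (m j : nat) : Prop := (1 <= j <= m)%nat.

Definition Q0 {X : BanachSpace} (m : nat) (g : nat -> X -> R) (x : X) : Prop :=
  forall j, inJ m j -> g j x <= 0.
Definition active {X : BanachSpace} (m : nat) (g : nat -> X -> R) (xb : X) (j : nat) : Prop :=
  inJ m j /\ g j xb = 0.
Definition Qset {X : BanachSpace} (p m : nat) (f g : nat -> X -> R) (xb x : X) : Prop :=
  Q0 m g x /\ forall i, inI p i -> f i x <= f i xb.

Definition Iu {X : BanachSpace} (p : nat) (f : nat -> X -> R) (xb u : X) (i : nat) : Prop :=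
  inI p i /\ clarke (f i) xb u = Fin 0.
Definition Ju {X : BanachSpace} (m : nat) (g : nat -> X -> R) (xb u : X) (j : nat) : Prop :=
  active m g xb j /\ clarke (g j) xb u = Fin 0.

Definition lex_le (a b : Rbar * Rbar) : Prop :=
  Rbar_lt (fst a) (fst b) \/ (fst a = fst b /\ Rbar_le (snd a) (snd b)).

Definition second_order {X : BanachSpace} (F : X -> R) (xb u v : X) : Rbar * Rbar :=
  (clarke F xb u, Rbar_plus (clarke F xb v) (clarke2 F xb u)).

Definition L2 {X : BanachSpace} (p m : nat) (f g : nat -> X -> R) (xb u v : X) : Prop :=
  (forall i, inI p i -> lex_le (second_order (f i) xb u v) (Fin 0, Fin 0)) /\
  (forall j, active m g xb j -> lex_le (second_order (g j) xb u v) (Fin 0, Fin 0)).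

Definition T2 {X : BanachSpace} (Om : X -> Prop) (xb u v : X) : Prop :=
  exists (t : nat -> R) (vk : nat -> X),
    (forall k, t k > 0) /\ Un_cv t 0 /\
    (forall eps, eps > 0 -> exists N, forall k, (k >= N)%nat -> vdist (vk k) v < eps) /\
    (forall k, Om (vadd (vadd xb (vscal (t k) u)) (vscal (t k ^ 2 / 2) (vk k)))).

Definition critical_dir {X : BanachSpace} (p m : nat) (f g : nat -> X -> R) (xb u : X) : Prop :=
  (forall i, inI p i -> Rbar_le (clarke (f i) xb u) (Fin 0)) /\
  (exists i, inI p i /\ clarke (f i) xb u = Fin 0) /\
  (forall j, active m g xb j -> Rbar_le (clarke (g j) xb u) (Fin 0)).

Definition local_weak_efficient {X : BanachSpace} (p m : nat) (f g : nat -> X -> R) (xb : X) : Prop :=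
  exists d, d > 0 /\ ~ exists x, vdist x xb < d /\ Q0 m g x /\
     forall i, inI p i -> f i x < f i xb.

(* Suppose v violated the conclusion.  Together with criticality of u it puts
   v in L²(Q; xb, u), hence in T²(Q0; xb, u): there are t_k ↓ 0 and v_k → v with
   x_k := xb + t_k u + t_k²/2 v_k feasible.  For every objective f_i the pair
   (f_i°(xb,u), f_i°(xb,v) + f_i°°(xb,u)) is lexicographically negative, so
   f_i strictly decreases along x_k: by the first-order term when f_i°(xb,u) < 0,
   by the second-order term when it vanishes, the Lipschitz constant absorbing
   the perturbation v_k - v.  Since x_k → xb, this contradicts local weak
   efficiency. *)
From Stdlib Require Import Reals Lra Lia Classical ClassicalEpsilon.
Open Scope R_scope.

Section VectorSpace.
Variable X : BanachSpace.

Lemma vadd_0l (x : X) : vadd vzero x = x.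
Proof. rewrite vadd_comm; apply vadd_zero. Qed.

Lemma vopp_unique (x y : X) : vadd x y = vzero -> y = vopp x.
Proof.
  intro H. rewrite <- (vadd_zero _ y), <- (vadd_opp _ x), vadd_assoc,
    (vadd_comm _ y x), H. apply vadd_0l.
Qed.

Lemma vscal_0 (x : X) : vscal 0 x = vzero.
Proof.
  assert (H : vscal 0 x = vadd (vscal 0 x) (vscal 0 x)).
  { rewrite <- vscal_distr_l. f_equal. ring. }
  transitivity (vadd (vscal 0 x) (vadd (vscal 0 x) (vopp (vscal 0 x)))).
  - rewrite vadd_opp, vadd_zero; reflexivity.
  - rewrite vadd_assoc, <- H. apply vadd_opp.
Qed.

Lemma vopp_scal (x : X) : vopp x = vscal (-1) x.
Proof.
  symmetry; apply vopp_unique. rewrite <- (vscal_one _ x) at 1.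
  rewrite <- vscal_distr_l. replace (1 + -1) with 0 by ring. apply vscal_0.
Qed.

Lemma vadd_addACA (a b c d : X) :
  vadd (vadd a b) (vadd c d) = vadd (vadd a c) (vadd b d).
Proof.
  rewrite !vadd_assoc. f_equal. rewrite <- !vadd_assoc. f_equal. apply vadd_comm.
Qed.

Lemma vopp_vadd (a b : X) : vopp (vadd a b) = vadd (vopp a) (vopp b).
Proof.
  symmetry; apply vopp_unique. rewrite vadd_addACA, !vadd_opp. apply vadd_zero.
Qed.

Lemma vdist_refl (x : X) : vdist x x = 0.
Proof.
  unfold vdist. rewrite vadd_opp, <- (vscal_0 vzero), vnorm_scal, Rabs_R0. ring.
Qed.

Lemma vdist_vadd_l (y w : X) : vdist (vadd y w) y = vnorm w.
Proof.
  unfold vdist. f_equal.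
  rewrite (vadd_comm _ y w), <- vadd_assoc, vadd_opp. apply vadd_zero.
Qed.

Lemma vdist_vscal (y a b : X) s :
  vdist (vadd y (vscal s a)) (vadd y (vscal s b)) = Rabs s * vdist a b.
Proof.
  unfold vdist. rewrite <- vnorm_scal. f_equal.
  rewrite vopp_vadd, vadd_addACA, vadd_opp, vadd_0l, vscal_distr_r. f_equal.
  rewrite !vopp_scal, !vscal_assoc. f_equal. ring.
Qed.

Lemma vnorm_le_vdist (a b : X) : vnorm a <= vdist a b + vnorm b.
Proof.
  unfold vdist. eapply Rle_trans; [|apply vnorm_triangle].
  right. f_equal.
  rewrite <- vadd_assoc, (vadd_comm _ (vopp b)), vadd_opp, vadd_zero. reflexivity.
Qed.

Lemma vdist_step (x u : X) t : 0 <= t -> vdist (vadd x (vscal t u)) x = t * vnorm u.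
Proof. intro Ht. rewrite vdist_vadd_l, vnorm_scal, Rabs_right; lra. Qed.

End VectorSpace.

Definition curve2 {X : BanachSpace} (xb u : X) (t : R) (w : X) : X :=
  vadd (vadd xb (vscal t u)) (vscal (t ^ 2 / 2) w).

Lemma vdist_curve2_le {X : BanachSpace} (xb u w : X) t :
  0 <= t <= 2 -> vdist (curve2 xb u t w) xb <= t * (vnorm u + vnorm w).
Proof.
  intro Ht. unfold curve2. rewrite <- vadd_assoc, vdist_vadd_l.
  eapply Rle_trans; [apply vnorm_triangle|].
  rewrite !vnorm_scal, !Rabs_right by nra.
  pose proof (vnorm_nonneg _ w).
  assert (t ^ 2 / 2 * vnorm w <= t * vnorm w) by (apply Rmult_le_compat_r; nra).
  lra.
Qed.

Lemma sup_R_lt_ub (S : R -> Prop) r q : Rbar_lt (sup_R S) (Fin r) -> S q -> q < r.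
Proof.
  unfold sup_R. destruct (excluded_middle_informative (exists x, S x)) as [Hne|Hne].
  - destruct (excluded_middle_informative (bound S)) as [Hb|Hb]; [|simpl; tauto].
    destruct (completeness S Hb Hne) as [s Hs]. simpl.
    intros H Hq. pose proof (proj1 Hs q Hq). lra.
  - intros _ Hq. exfalso; eauto.
Qed.

Lemma Rbar_inf_lt (P : Rbar -> Prop) r :
  Rbar_lt (Rbar_inf P) (Fin r) -> exists y, P y /\ Rbar_lt y (Fin r).
Proof.
  unfold Rbar_inf, Rbar_sup.
  destruct (excluded_middle_informative (P (Rbar_opp PInf))) as [HP|HP].
  { intros _. exists MInf. split; [exact HP|exact I]. }
  unfold sup_R.
  destruct (excluded_middle_informative (exists x, P (Rbar_opp (Fin x)))) as [Hne|Hne];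
    [|simpl; tauto].
  (* a witness below [r] is exactly an element of the opposite set above [-r] *)
  assert (Hub : ~ (exists y, P y /\ Rbar_lt y (Fin r)) ->
                is_upper_bound (fun x => P (Rbar_opp (Fin x))) (- r)).
  { intros Hn z Hz. apply Rnot_lt_le; intro Hz2. apply Hn.
    exists (Fin (- z)). split; [exact Hz|simpl; lra]. }
  destruct (excluded_middle_informative (bound (fun x => P (Rbar_opp (Fin x)))))
    as [Hb|Hb].
  - destruct (completeness _ Hb Hne) as [s Hs]. simpl. intro H.
    apply NNPP; intro Hn. pose proof (proj2 Hs (- r) (Hub Hn)). lra.
  - intros _. apply NNPP; intro Hn. apply Hb. exists (- r). exact (Hub Hn).
Qed.

Lemma Rbar_lt_0_gap a : Rbar_lt a (Fin 0) -> exists c, c < 0 /\ Rbar_lt a (Fin c).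
Proof.
  destruct a as [a| |]; simpl; try tauto; intro H.
  - exists (a / 2). simpl; lra.
  - exists (-1). simpl; lra.
Qed.

Lemma Rbar_plus_lt_0 a b : Rbar_lt (Rbar_plus a b) (Fin 0) ->
  exists al be, Rbar_lt a (Fin al) /\ Rbar_lt b (Fin be) /\ al + be < 0.
Proof.
  destruct a as [a| |], b as [b| |]; simpl; try tauto; intro H.
  - exists (a - (a + b) / 3), (b - (a + b) / 3). simpl; lra.
  - exists (a + 1), (- a - 2). simpl; lra.
  - exists (- b - 2), (b + 1). simpl; lra.
  - exists (-1), (-1). simpl; lra.
Qed.

Definition lex_lt (a b : Rbar * Rbar) : Prop :=
  Rbar_lt (fst a) (fst b) \/ (fst a = fst b /\ Rbar_lt (snd a) (snd b)).

Lemma lex_lt_le a b : lex_lt a b -> lex_le a b.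
Proof. intros [H|[H1 H2]]; [left|right; split; [|left]]; assumption. Qed.

Section Increments.
Context {X : BanachSpace} (F : X -> R) (xb u : X).

Lemma clarke_increment_lt c :
  Rbar_lt (clarke F xb u) (Fin c) -> exists d, d > 0 /\
    forall x t, vdist x xb < d -> 0 < t < d -> F (vadd x (vscal t u)) - F x < c * t.
Proof.
  intro H. apply Rbar_inf_lt in H. destruct H as [y [[d [Hd ->]] Hy]].
  exists d; split; [exact Hd|]. intros x t Hx Ht.
  assert (Hq : (F (vadd x (vscal t u)) - F x) / t < c).
  { eapply sup_R_lt_ub; [exact Hy|]. exists x, t; auto. }
  apply (Rmult_lt_compat_r t) in Hq; [|lra].
  field_simplify in Hq; lra.
Qed.

Lemma clarke2_increment_lt b :
  clarke F xb u = Fin 0 -> Rbar_lt (clarke2 F xb u) (Fin b) -> exists d, d > 0 /\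
    forall t, 0 < t < d -> F (vadd xb (vscal t u)) - F xb < b * (t ^ 2 / 2).
Proof.
  intros H0 H. apply Rbar_inf_lt in H. destruct H as [y [[d [Hd ->]] Hy]].
  exists d; split; [exact Hd|]. intros t Ht.
  assert (Hq : (F (vadd xb (vscal t u)) - F xb - t * 0) / (t ^ 2 / 2) < b).
  { eapply sup_R_lt_ub; [exact Hy|]. exists t. rewrite H0. auto. }
  apply (Rmult_lt_compat_r (t ^ 2 / 2)) in Hq; [|nra].
  field_simplify in Hq; [lra|nra].
Qed.

Lemma loc_lipschitz_at_upper : loc_lipschitz_at F xb ->
  exists K d, 0 <= K /\ d > 0 /\ forall x y, vdist x xb < d -> vdist y xb < d ->
    F x - F y <= K * vdist x y.
Proof.
  intros [K0 [d [Hd H]]]. exists (Rabs K0), d. split; [apply Rabs_pos|split; auto].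
  intros x y Hx Hy. specialize (H x y Hx Hy).
  pose proof (vnorm_nonneg _ (vadd x (vopp y))).
  pose proof (Rle_abs K0). pose proof (Rle_abs (F x - F y)).
  unfold vdist in *. nra.
Qed.

End Increments.

Definition eventually (P : nat -> Prop) : Prop :=
  exists N, forall k, (k >= N)%nat -> P k.

Lemma eventually_and (P Q : nat -> Prop) :
  eventually P -> eventually Q -> eventually (fun k => P k /\ Q k).
Proof.
  intros [N1 H1] [N2 H2]. exists (max N1 N2). intros k Hk.
  split; [apply H1|apply H2]; lia.
Qed.

Lemma eventually_mono (P Q : nat -> Prop) :
  eventually P -> (forall k, P k -> Q k) -> eventually Q.
Proof. intros [N H] HPQ. exists N. auto. Qed.

Lemma eventually_witness (P : nat -> Prop) : eventually P -> exists k, P k.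
Proof. intros [N H]. exists N. apply H. lia. Qed.

Lemma eventually_forall_inI p (P : nat -> nat -> Prop) :
  (forall i, inI p i -> eventually (P i)) ->
  eventually (fun k => forall i, inI p i -> P i k).
Proof.
  unfold inI. induction p as [|p IH]; intro H.
  - exists 0%nat. intros; lia.
  - destruct IH as [N1 HN1]; [intros i Hi; apply H; lia|].
    destruct (H (S p)) as [N2 HN2]; [lia|].
    exists (max N1 N2). intros k Hk i Hi.
    destruct (Nat.eq_dec i (S p)) as [->|Hne]; [apply HN2|apply HN1]; lia.
Qed.

Section SecondOrderSequence.
Context {X : BanachSpace} (xb u v : X) (t : nat -> R) (vk : nat -> X).
Hypothesis Ht_pos : forall k, t k > 0.
Hypothesis Ht_cv : Un_cv t 0.
Hypothesis Hvk_cv : forall eps, eps > 0 -> eventually (fun k => vdist (vk k) v < eps).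

Lemma eventually_t_lt a : a > 0 -> eventually (fun k => t k < a).
Proof.
  intro Ha. destruct (Ht_cv a Ha) as [N HN]. exists N. intros k Hk.
  specialize (HN k Hk). unfold R_dist in HN. rewrite Rminus_0_r in HN.
  pose proof (Rle_abs (t k)). lra.
Qed.

Lemma eventually_t_mul_lt a C : a > 0 -> 0 <= C -> eventually (fun k => t k * C < a).
Proof.
  intros Ha HC. apply (eventually_mono _ _ (eventually_t_lt (a / (C + 1)) ltac:(
    apply Rdiv_lt_0_compat; lra))).
  intros k Hk. pose proof (Ht_pos k).
  apply (Rmult_lt_compat_r (C + 1)) in Hk; [|lra]. field_simplify in Hk; nra.
Qed.

Lemma eventually_vk_bounded : eventually (fun k => vnorm (vk k) < vnorm v + 1).
Proof.
  apply (eventually_mono _ _ (Hvk_cv 1 Rlt_0_1)).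
  intros k Hk. pose proof (vnorm_le_vdist _ (vk k) v). lra.
Qed.

Lemma eventually_curve2_in_ball r :
  r > 0 -> eventually (fun k => vdist (curve2 xb u (t k) (vk k)) xb < r).
Proof.
  intro Hr. pose proof (vnorm_nonneg _ u). pose proof (vnorm_nonneg _ v).
  apply (eventually_mono _ _ (eventually_and _ _ (eventually_t_lt 1 Rlt_0_1)
    (eventually_and _ _ (eventually_t_mul_lt r (vnorm u + vnorm v + 1) Hr ltac:(lra))
       eventually_vk_bounded))).
  intros k (Ht1 & Htr & Hw). pose proof (Ht_pos k).
  eapply Rle_lt_trans; [apply vdist_curve2_le; lra|]. nra.
Qed.

Lemma eventually_descent_first_order (F : X -> R) :
  loc_lipschitz_at F xb -> Rbar_lt (clarke F xb u) (Fin 0) ->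
  eventually (fun k => F (curve2 xb u (t k) (vk k)) < F xb).
Proof.
  intros HF Hu.
  destruct (Rbar_lt_0_gap _ Hu) as [c [Hc Huc]].
  destruct (clarke_increment_lt F xb u c Huc) as [d1 [Hd1 Hinc]].
  destruct (loc_lipschitz_at_upper F xb HF) as [K [dL [HK [HdL Hlip]]]].
  set (M := vnorm v + 1).
  pose proof (vnorm_nonneg _ u). pose proof (vnorm_nonneg _ v).
  apply (eventually_mono _ _ (eventually_and _ _ (eventually_t_lt 1 Rlt_0_1)
    (eventually_and _ _ (eventually_t_lt d1 Hd1)
    (eventually_and _ _ (eventually_t_mul_lt dL (vnorm u + M) HdL ltac:(unfold M; lra))
    (eventually_and _ _ (eventually_t_mul_lt (- c) (K * M) ltac:(lra)
                           ltac:(unfold M; nra))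
       eventually_vk_bounded))))).
  intros k (Ht1 & Htd1 & HtL & HtK & Hw). fold M in Hw.
  pose proof (Ht_pos k). pose proof (vnorm_nonneg _ (vk k)).
  set (y := vadd xb (vscal (t k) u)).
  assert (Hy : F y - F xb < c * t k).
  { apply Hinc; [rewrite vdist_refl|]; lra. }
  assert (Hperturb : F (curve2 xb u (t k) (vk k)) - F y
                     <= K * (t k ^ 2 / 2 * vnorm (vk k))).
  { unfold curve2. fold y. rewrite <- (Rabs_right (t k ^ 2 / 2)) at 2 by nra.
    rewrite <- vnorm_scal, <- (vdist_vadd_l _ y). apply Hlip.
    - eapply Rle_lt_trans; [apply vdist_curve2_le; lra|]. nra.
    - unfold y. rewrite vdist_step by lra. nra. }
  assert (K * vnorm (vk k) <= K * M) by (apply Rmult_le_compat_l; lra).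
  nra.
Qed.

Lemma eventually_descent_second_order (F : X -> R) :
  loc_lipschitz_at F xb -> clarke F xb u = Fin 0 ->
  Rbar_lt (Rbar_plus (clarke F xb v) (clarke2 F xb u)) (Fin 0) ->
  eventually (fun k => F (curve2 xb u (t k) (vk k)) < F xb).
Proof.
  intros HF Hu0 Hv.
  destruct (Rbar_plus_lt_0 _ _ Hv) as [al [be [Hal [Hbe Hab]]]].
  destruct (clarke_increment_lt F xb v al Hal) as [d1 [Hd1 Hinc1]].
  destruct (clarke2_increment_lt F xb u be Hu0 Hbe) as [d2 [Hd2 Hinc2]].
  destruct (loc_lipschitz_at_upper F xb HF) as [K [dL [HK [HdL Hlip]]]].
  set (M := vnorm v + 1).
  pose proof (vnorm_nonneg _ u). pose proof (vnorm_nonneg _ v).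
  apply (eventually_mono _ _ (eventually_and _ _ (eventually_t_lt 1 Rlt_0_1)
    (eventually_and _ _ (eventually_t_lt (Rmin d1 d2) ltac:(apply Rmin_pos; lra))
    (eventually_and _ _ (eventually_t_mul_lt d1 (vnorm u) Hd1 ltac:(lra))
    (eventually_and _ _ (eventually_t_mul_lt dL (vnorm u + M) HdL ltac:(unfold M; lra))
    (eventually_and _ _ eventually_vk_bounded
       (Hvk_cv (- (al + be) / (K + 1)) ltac:(apply Rdiv_lt_0_compat; lra)))))))).
  intros k (Ht1 & Htd & Htu & HtL & Hw & Hwv). fold M in Hw.
  apply Rmin_Rgt in Htd as [Htd1 Htd2].
  pose proof (Ht_pos k). pose proof (vnorm_nonneg _ (vk k)).
  set (s := t k ^ 2 / 2). set (y := vadd xb (vscal (t k) u)).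
  assert (Hs : 0 < s < t k) by (unfold s; nra).
  assert (Hy : F y - F xb < be * s) by (apply Hinc2; lra).
  assert (Hyv : F (vadd y (vscal s v)) - F y < al * s).
  { apply Hinc1; [|lra]. unfold y. rewrite vdist_step by lra. lra. }
  assert (Hwv' : K * vdist (vk k) v < - (al + be)).
  { apply (Rmult_lt_compat_r (K + 1)) in Hwv; [|lra]. field_simplify in Hwv; [|lra].
    pose proof (vnorm_nonneg _ (vadd (vk k) (vopp v))). unfold vdist in *. nra. }
  assert (Hperturb : F (curve2 xb u (t k) (vk k)) - F (vadd y (vscal s v))
                     <= K * (s * vdist (vk k) v)).
  { unfold curve2. fold s y. rewrite <- (Rabs_right s) at 3 by lra.
    rewrite <- (vdist_vscal _ y). unfold M in *.
    apply Hlip; (eapply Rle_lt_trans; [apply vdist_curve2_le; lra|]); nra. }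
  pose proof (vnorm_nonneg _ (vadd (vk k) (vopp v))). unfold vdist in *. nra.
Qed.

Lemma eventually_descent (F : X -> R) :
  loc_lipschitz_at F xb -> lex_lt (second_order F xb u v) (Fin 0, Fin 0) ->
  eventually (fun k => F (curve2 xb u (t k) (vk k)) < F xb).
Proof.
  intros HF [Hu|[Hu0 Hv]].
  - exact (eventually_descent_first_order F HF Hu).
  - exact (eventually_descent_second_order F HF Hu0 Hv).
Qed.

End SecondOrderSequence.

Theorem corollary4p3 (X : BanachSpace) (p m : nat) (f g : nat -> X -> R) (xb : X)
  (Hf : forall i, inI p i -> loc_lipschitz_at (f i) xb)
  (Hga : forall j, active m g xb j -> loc_lipschitz_at (g j) xb)
  (Hgn : forall j, inJ m j -> ~ active m g xb j -> continuous_at (g j) xb)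
  (Hxb : Q0 m g xb)
  (Hsol : local_weak_efficient p m f g xb)
  (u : X) (Hu : critical_dir p m f g xb u)
  (Hincl : forall v, L2 p m f g xb u v -> T2 (Q0 m g) xb u v) :
  ~ exists v : X,
      (forall i, Iu p f xb u i ->
         Rbar_lt (Rbar_plus (clarke (f i) xb v) (clarke2 (f i) xb u)) (Fin 0)) /\
      (forall j, Ju m g xb u j ->
         Rbar_le (Rbar_plus (clarke (g j) xb v) (clarke2 (g j) xb u)) (Fin 0)).
Proof.
  intros [v [Hv_f Hv_g]]. destruct Hu as [Hu_f [_ Hu_g]].
  assert (Hlex_f : forall i, inI p i ->
            lex_lt (second_order (f i) xb u v) (Fin 0, Fin 0)).
  { intros i Hi. destruct (Hu_f i Hi) as [Hlt|Heq]; [left; exact Hlt|].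
    right; split; [exact Heq|]. apply Hv_f; split; assumption. }
  assert (HL2 : L2 p m f g xb u v).
  { split.
    - intros i Hi. exact (lex_lt_le _ _ (Hlex_f i Hi)).
    - intros j Hj. destruct (Hu_g j Hj) as [Hlt|Heq]; [left; exact Hlt|].
      right; split; [exact Heq|]. apply Hv_g; split; assumption. }
  destruct (Hincl v HL2) as [t [vk [Ht_pos [Ht_cv [Hvk_cv HQ0]]]]].
  destruct Hsol as [d [Hd Hno]]. apply Hno.
  destruct (eventually_witness _ (eventually_and _ _
      (eventually_curve2_in_ball xb u v t vk Ht_pos Ht_cv Hvk_cv d Hd)
      (eventually_forall_inI p _ (fun i Hi =>
         eventually_descent xb u v t vk Ht_pos Ht_cv Hvk_cv (f i)
           (Hf i Hi) (Hlex_f i Hi)))))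
    as [k [Hnear Hdesc]].
  exists (curve2 xb u (t k) (vk k)). split; [exact Hnear|split; [apply HQ0|exact Hdesc]].
Qed.
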